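(* Suppose $K$ and $t=KM/N$ are both even, with $2\le t\le K$. Then the D2D coded caching rate $R=N/M-1$ is achievable with some subpacketization $F$ satisfying $F\le \tfrac12 F_{\rm JCM}$.
   Context: D2D coded caching setting: there are $N\ge 1$ files $W_1,\dots,W_N$ and $K\ge 2$ users, each with a cache of size $M$ files, $0<M\le N$, and $t:=KM/N$ is assumed to be a positive integer. A D2D coded caching scheme with (uncoded placement and) subpacketization $F\in\mathbb{N}_+$ is defined as follows. Fix a packet size $b\ge 1$; each file is a sequence of $F$ packets $W_n=(W_n^{(1)},\dots,W_n^{(F)})$, $W_n^{(j)}\in\{0,1\}^b$. Placement: each user $k\in[K]$ stores the packets $\{W_n^{(j)}:(n,j)\in Z_k\}$ for a fixed index set $Z_k\subseteq[N]\times[F]$ with $|Z_k|\le MF$ (independent of demands and file contents). Delivery: for every demand vector $\mathbf d=(d_1,\dots,d_K)\in[N]^K$, each user $k$ broadcasts to all other users $\ell_k(\mathbf d)\in\mathbb{N}$ blocks in $\{0,1\}^b$, each a deterministic function of the packets stored by user $k$; it is required that for all file contents each user $k$ can recover all $F$ packets of $W_{d_k}$ from its stored packets and the blocks sent by the other users. The rate is $R=\max_{\mathbf d}\frac{1}{F}\sum_{k=1}^K\ell_k(\mathbf d)$ (transmitted bits normalized by the file size $Fb$). The rate $R$ is achievable with subpacketization $F$ if such a scheme with rate $R$ exists for every packet size $b\ge 1$. Define $F_{\rm JCM}:=t\binom{K}{t}$. *)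

From HB Require Import structures.
From mathcomp Require Import all_boot all_order all_algebra.
Set Implicit Arguments. Unset Strict Implicit. Unset Printing Implicit Defensive.
Import Order.TTheory GRing.Theory Num.Theory.

Definition block (b : nat) := b.-tuple bool.

(* file contents: W n j = j-th packet of file W_n *)
Definition library (N F b : nat) := 'I_N -> 'I_F -> block b.

Definition demand (N K : nat) := {ffun 'I_K -> 'I_N}.

Definition agree_on (N F b : nat) (Z : {set 'I_N * 'I_F}) (W W' : library N F b) :=
  forall n j, (n, j) \in Z -> W n j = W' n j.

(* A D2D coded caching scheme with uncoded placement, subpacketization F,
   packet size b, cache size M (in files). *)
Unset Implicit Arguments.
Record d2d_scheme (N K F b : nat) (M : rat) := D2DScheme {
  placement : 'I_K -> {set 'I_N * 'I_F};
  nblocks : 'I_K -> demand N K -> nat;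
  transmit : forall (k : 'I_K) (d : demand N K),
      library N F b -> 'I_(nblocks k d) -> block b;
  decode : forall (k : 'I_K) (d : demand N K),
      library N F b -> (forall j : 'I_K, 'I_(nblocks j d) -> block b) ->
      'I_F -> block b;
  cache_size : forall k, ((#|placement k|)%:R <= M * F%:R :> rat)%R;
  transmit_local : forall (k : 'I_K) (d : demand N K) (W W' : library N F b),
      agree_on (placement k) W W' -> transmit k d W =1 transmit k d W';
  decode_local : forall (k : 'I_K) (d : demand N K) (W W' : library N F b) (m m' : forall j : 'I_K, 'I_(nblocks j d) -> block b),
      agree_on (placement k) W W' ->
      (forall j, j != k -> m j =1 m' j) ->
      decode k d W m =1 decode k d W' m';
  decode_correct : forall (k : 'I_K) (d : demand N K) (W : library N F b),
      decode k d W (fun j => transmit j d W) =1 W (d k)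
}.

Arguments placement {N K F b M}.
Arguments nblocks {N K F b M}.
Arguments transmit {N K F b M}.
Arguments decode {N K F b M}.

Definition d2d_rate (N K F b : nat) (M : rat) (S : d2d_scheme N K F b M) : rat :=
  ((\max_(d : demand N K) \sum_(k < K) nblocks S k d)%N%:R / F%:R)%R.

Definition achievable_with (N K : nat) (M R : rat) (F : nat) : Prop :=
  (0 < F)%N /\
  forall b : nat, (0 < b)%N -> exists S : d2d_scheme N K F b M, d2d_rate N K F b M S = R.

Definition F_JCM (K t : nat) : nat := t * 'C(K, t).

(* The Ji-Caire-Molisch scheme splits each file into packets W_{n,T,u}, T a
   t-subset of users and u in T.  Split the users into two halves and keep only
   the packets whose u lies in the smaller part of T (ties to [lower]): as t is
   even this keeps at most t/2 labels per T, hence F <= F_JCM / 2.  A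
   transmission is indexed by (S, u) with |S| = t+1 and u in the smaller part
   of S; user u broadcasts the XOR over r in S \ {u} of the packet (S \ r, u)
   of W_{d_r}.  Since |S| is odd, removing r changes the smaller part only by
   creating a tie, and then a fixed bijection between the two parts of S \ r
   relabels u.  All users cache equally many packets, because
   min(|T n A|, |T n B|) is invariant under the permutations preserving the
   halves, which act transitively on users; double counting transmissions
   against receivers gives t |X| = (K - t) F, i.e. the rate K/t - 1 = N/M - 1. *)

From HB Require Import structures.
From mathcomp Require Import all_boot all_order all_algebra perm zify ring.
Import Order.TTheory GRing.Theory Num.Theory.

Lemma card_set_sum {T : finType} (p : pred T) : #|[set x | p x]| = \sum_x p x.
Proof.
rewrite -sum1_card big_mkcond /=; apply: eq_bigr => x _.
by rewrite inE; case: (p x).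
Qed.

Section BlockXor.
Variable b : nat.

Definition zero_block : block b := [tuple false | i < b].
Definition xor_block (u v : block b) : block b :=
  [tuple addb (tnth u i) (tnth v i) | i < b].

Lemma tnth_xor_block u v i :
  tnth (xor_block u v) i = addb (tnth u i) (tnth v i).
Proof. exact: tnth_mktuple. Qed.

Lemma xor_blockA : associative xor_block.
Proof. by move=> u v w; apply: eq_from_tnth => i; rewrite !tnth_xor_block addbA. Qed.

Lemma xor_blockC : commutative xor_block.
Proof. by move=> u v; apply: eq_from_tnth => i; rewrite !tnth_xor_block addbC. Qed.

Lemma xor0_block : left_id zero_block xor_block.
Proof. by move=> u; apply: eq_from_tnth => i; rewrite tnth_xor_block tnth_mktuple. Qed.

Lemma xor_blockK v : cancel (xor_block^~ v) (xor_block^~ v).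
Proof. by move=> u; apply: eq_from_tnth => i; rewrite !tnth_xor_block addbK. Qed.

HB.instance Definition _ :=
  Monoid.isComLaw.Build (block b) zero_block xor_block xor_blockA xor_blockC xor0_block.

End BlockXor.

(* A delivery design: transmission [x], broadcast by [sender x], is the XOR
   over users [r] of packet [target x r] of the file demanded by [r]. *)
Section DeliveryDesign.
Context {N K : nat} {M : rat} {P X : finType}.
Context {cached : 'I_K -> P -> bool} {sender : X -> 'I_K}.
Context {target : X -> 'I_K -> option P}.

Hypothesis target_cached_sender :
  forall {x r q}, target x r = Some q -> cached (sender x) q.
Hypothesis target_uncached : forall {x r q}, target x r = Some q -> ~~ cached r q.
Hypothesis target_cached_others : forall {x r r' q q'},
  target x r = Some q -> target x r' = Some q' -> r != r' -> cached r q'.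
Hypothesis target_cover : forall {k q}, ~~ cached k q -> exists x, target x k = Some q.

Section Scheme.
Hypothesis cache_bound :
  forall k, ((N * #|[set q | cached k q]|)%:R <= M * #|P|%:R :> rat)%R.
Variable b : nat.

Local Notation F := #|P|.

Definition sent_by (k : 'I_K) := [set x | sender x == k].

Lemma sent_by_sender x : x \in sent_by (sender x).
Proof. by rewrite inE. Qed.

Definition design_placement (k : 'I_K) : {set 'I_N * 'I_F} :=
  [set nj | cached k (enum_val nj.2)].

Definition design_nblocks (k : 'I_K) (d : demand N K) := #|sent_by k|.

Definition coded_term (d : demand N K) (W : library N F b) (x : X) (r : 'I_K) :=
  if target x r is Some q then W (d r) (enum_rank q) else zero_block b.

Definition design_transmit k d W (i : 'I_(design_nblocks k d)) : block b :=
  \big[xor_block b/zero_block b]_r coded_term d W (enum_val i) r.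

(* A packet not in the cache of [k] is recovered from the block carrying it by
   cancelling the other summands, all of which [k] has cached. *)
Definition design_decode k d (W : library N F b)
    (m : forall j : 'I_K, 'I_(design_nblocks j d) -> block b) (j : 'I_F) : block b :=
  if cached k (enum_val j) then W (d k) j else
  if [pick x | target x k == Some (enum_val j)] is Some x then
    xor_block b (m (sender x) (enum_rank_in (sent_by_sender x) x))
      (\big[xor_block b/zero_block b]_(r | r != k) coded_term d W x r)
  else zero_block b.

Lemma mem_design_placement k n j :
  ((n, j) \in design_placement k) = cached k (enum_val j).
Proof. by rewrite inE. Qed.

Lemma card_design_placement k :
  #|design_placement k| = N * #|[set q | cached k q]|.
Proof.
have -> : design_placement k = setX [set: 'I_N] [set j | cached k (enum_val j)].
  by apply/setP => -[n j]; rewrite !inE.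
rewrite cardsX cardsT card_ord -(card_imset _ enum_val_inj).
congr (_ * _); apply: eq_card => q; rewrite inE.
apply/imsetP/idP => [[j]|cq]; first by rewrite inE => cj ->.
by exists (enum_rank q); rewrite ?inE enum_rankK.
Qed.

Lemma design_transmit_local k d (W W' : library N F b) :
  agree_on (design_placement k) W W' -> design_transmit k d W =1 design_transmit k d W'.
Proof.
move=> eqW i; apply: eq_bigr => r _; rewrite /coded_term.
case Ex: (target _ r) => [q|] //; apply: eqW.
rewrite mem_design_placement enum_rankK.
by have := enum_valP i; rewrite inE => /eqP <-; apply: target_cached_sender Ex.
Qed.

Lemma design_decode_local k d (W W' : library N F b)
    (m m' : forall j : 'I_K, 'I_(design_nblocks j d) -> block b) :
  agree_on (design_placement k) W W' -> (forall j, j != k -> m j =1 m' j) ->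
  design_decode k d W m =1 design_decode k d W' m'.
Proof.
move=> eqW eqm j; rewrite /design_decode.
case: ifP => ckj; first by apply: eqW; rewrite mem_design_placement.
case: pickP => [x /eqP Ex|] //.
have sender_k : sender x != k.
  have := target_uncached Ex; apply: contraNneq => <-; apply: target_cached_sender Ex.
rewrite (eqm _ sender_k); congr (xor_block b); apply: eq_bigr => r rk.
rewrite /coded_term; case Er: (target x r) => [q|] //; apply: eqW.
by rewrite mem_design_placement enum_rankK (target_cached_others Ex Er) // eq_sym.
Qed.

Lemma design_decode_correct k d (W : library N F b) :
  design_decode k d W (fun j => design_transmit j d W) =1 W (d k).
Proof.
move=> j; rewrite /design_decode; case: ifPn => // ckj.
case: pickP => [x /eqP Ex|none]; last first.
  by have [x Ex] := target_cover ckj; have := none x; rewrite Ex eqxx.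
rewrite /design_transmit enum_rankK_in ?sent_by_sender // (bigD1 k) //=.
by rewrite xor_blockK /coded_term Ex enum_valK.
Qed.

Lemma sum_card_sent_by : \sum_(k < K) #|sent_by k| = #|X|.
Proof.
rewrite -sum1_card (partition_big sender xpredT) //=.
by apply: eq_bigr => k _; rewrite -sum1_card; apply: eq_bigl => x; rewrite inE.
Qed.

Lemma design_scheme_rate : (0 < N)%N ->
  exists S : d2d_scheme N K F b M, d2d_rate N K F b M S = (#|X|%:R / F%:R)%R.
Proof.
move=> N_gt0.
have cache_size k : ((#|design_placement k|)%:R <= M * F%:R :> rat)%R.
  by rewrite card_design_placement.
exists (@D2DScheme N K F b M _ _ _ _ cache_size design_transmit_local
                    design_decode_local design_decode_correct).
rewrite /d2d_rate /=; congr (_%:R / _)%R; apply/eqP; rewrite eqn_leq.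
rewrite -sum_card_sent_by (leq_bigmax [ffun=> Ordinal N_gt0]) andbT.
by apply/bigmax_leqP => d _; rewrite /design_nblocks.
Qed.

End Scheme.

Section Counting.
Variable t : nat.
Hypothesis card_receivers : forall x, #|[set r | target x r != None]| = t.
Hypothesis card_cachers : forall q, #|[set k | cached k q]| = t.
Hypothesis target_inj :
  forall {x x' r q}, target x r = Some q -> target x' r = Some q -> x = x'.

(* Double counting the triples (x, r, q) with [target x r = Some q]. *)
Lemma card_transmissions : t * #|X| = (K - t) * #|P|.
Proof.
have sum_packets x r : \sum_q (target x r == Some q : nat) = (target x r != None).
  case: (target x r) => [q|]; last by rewrite big1.
  rewrite (bigD1 q) //= eqxx big1 // => q' q'q.
  by rewrite (inj_eq Some_inj) eq_sym (negbTE q'q).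
have sum_senders r q : \sum_x (target x r == Some q : nat) = ~~ cached r q.
  have [crq|/target_cover [x0 Ex0]] := boolP (cached r q).
    by rewrite big1 // => x _; case: eqP => // /target_uncached; rewrite crq.
  rewrite (bigD1 x0) //= Ex0 eqxx big1 // => x xx0.
  by case: eqP => // /(target_inj Ex0) x0x; rewrite x0x eqxx in xx0.
have sum_uncached q : \sum_r (~~ cached r q : nat) = K - t.
  rewrite -card_set_sum.
  have -> : [set r | ~~ cached r q] = ~: [set k | cached k q].
    by apply/setP => r; rewrite !inE.
  by rewrite cardsCs setCK card_ord card_cachers.
have -> : t * #|X| = \sum_x \sum_r \sum_q (target x r == Some q : nat).
  rewrite mulnC -sum_nat_const; apply: eq_bigr => x _.
  by rewrite -(card_receivers x) card_set_sum; apply: eq_bigr => r _.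
rewrite exchange_big (eq_bigr (fun r => \sum_q (~~ cached r q : nat))) => [|r _].
  rewrite exchange_big (eq_bigr (fun _ => K - t)) => [|q _]; last exact: sum_uncached.
  by rewrite sum_nat_const mulnC.
by rewrite exchange_big; apply: eq_bigr => q _; rewrite sum_senders.
Qed.

End Counting.
End DeliveryDesign.

Lemma set_neq_setC {T : finType} (A : {set T}) (x : T) : A != ~: A.
Proof. by apply/eqP => eA; have := in_setC x A; rewrite -eA; case: (x \in A). Qed.

Lemma cardsI_setD1 {T : finType} (S Y : {set T}) r : r \in S ->
  #|S :&: Y| = (r \in Y) + #|(S :\ r) :&: Y|.
Proof.
move=> Sr; rewrite (cardsD1 r (S :&: Y)) inE Sr /=; congr (_ + _).
by apply: eq_card => y; rewrite !inE; case: (y == r); rewrite ?andbF.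
Qed.

Lemma card_imsetI {T : finType} (f : T -> T) (A Y Z : {set T}) :
  injective f -> (forall x, (f x \in Y) = (x \in Z)) -> #|f @: A :&: Y| = #|A :&: Z|.
Proof.
move=> inj_f fYZ; have -> : f @: A :&: Y = f @: (A :&: Z).
  apply/setP => y; rewrite !inE; apply/andP/imsetP.
    by case=> /imsetP [x Ax ->] Yfx; exists x; rewrite // inE Ax -fYZ.
  by case=> x /setIP [Ax Zx] ->; rewrite fYZ imset_f.
by rewrite card_imset.
Qed.

Lemma exists_subset_card {T : finType} (B : {set T}) k : k <= #|B| ->
  exists2 A : {set T}, A \subset B & #|A| = k.
Proof.
move=> le_kB; have : 0 < #|[set A : {set T} | A \subset B & #|A| == k]|.
  by rewrite cards_draws bin_gt0.
by case/card_gt0P => A; rewrite inE => /andP [sAB /eqP cA]; exists A.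
Qed.

Section Transfer.
Context {T : finType} (Y Z : {set T}).

Definition transfer (u : T) : T := nth u (enum Z) (index u (enum Y)).

Hypothesis card_YZ : #|Y| = #|Z|.

Lemma index_enum_lt {u} : u \in Y -> index u (enum Y) < size (enum Z).
Proof. by move=> Yu; rewrite -cardE -card_YZ cardE index_mem mem_enum. Qed.

Lemma transfer_in u : u \in Y -> transfer u \in Z.
Proof. by move=> Yu; rewrite -mem_enum mem_nth ?index_enum_lt. Qed.

Lemma transfer_inj : {in Y &, injective transfer}.
Proof.
move=> u v Yu Yv; rewrite /transfer (set_nth_default u _ (index_enum_lt Yv)).
move/eqP; rewrite nth_uniq ?enum_uniq ?index_enum_lt // => /eqP eq_index.
by have := congr1 (nth u (enum Y)) eq_index; rewrite !nth_index ?mem_enum.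
Qed.

Lemma transfer_onto l : l \in Z -> exists2 u, u \in Y & transfer u = l.
Proof.
move=> Zl; have lt_l : index l (enum Z) < size (enum Y).
  by rewrite -cardE card_YZ cardE index_mem mem_enum.
exists (nth l (enum Y) (index l (enum Z))); first by rewrite -mem_enum mem_nth.
by rewrite /transfer index_uniq ?enum_uniq // nth_index ?mem_enum.
Qed.

End Transfer.

Section HalvedScheme.
Variables (K h : nat).

Definition lower : {set 'I_K} := [set i : 'I_K | i < h].

Definition small_side (T : {set 'I_K}) : {set 'I_K} :=
  if #|T :&: lower| <= #|T :&: ~: lower| then lower else ~: lower.

Definition weight (T : {set 'I_K}) := #|T :&: small_side T|.

Lemma cards_lower_upper (T : {set 'I_K}) :
  #|T :&: lower| + #|T :&: ~: lower| = #|T|.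
Proof. by rewrite -setDE cardsID. Qed.

Lemma weight_min T : weight T = minn #|T :&: lower| #|T :&: ~: lower|.
Proof. by rewrite /weight /small_side; case: leqP. Qed.

Lemma double_weight_le T : 2 * weight T <= #|T|.
Proof. by rewrite weight_min -(cards_lower_upper T); lia. Qed.

(* On a set of odd size the small side can only move by a newly created tie,
   which is broken in favour of [lower]. *)
Lemma small_side_setD1 {S : {set 'I_K}} {r} : odd #|S| -> r \in S ->
  small_side (S :\ r) = small_side S \/
  [/\ small_side S = ~: lower, small_side (S :\ r) = lower &
      #|(S :\ r) :&: ~: lower| = #|(S :\ r) :&: lower|].
Proof.
move=> odd_S Sr; have [m Sm] : exists m, #|S| = (m + m).+1.
  by exists #|S|./2; rewrite -[LHS]odd_double_half odd_S -addnn.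
move: (cardsI_setD1 S lower r Sr) (cardsI_setD1 S (~: lower) r Sr).
move: (cards_lower_upper S); rewrite /small_side in_setC Sm.
set a := #|(S :\ r) :&: lower|; set b := #|(S :\ r) :&: ~: lower|.
case: (r \in lower) => /= card_S E1 E2; rewrite E1 E2 ?add0n ?add1n in card_S *.
all: case: (leqP a b) => ab; case: leqP => ab'; try by left.
all: by [exfalso; lia | right; split => //; lia].
Qed.

Definition labelled_pair n (x : {set 'I_K} * 'I_K) :=
  (#|x.1| == n) && (x.2 \in x.1 :&: small_side x.1).

(* (T, u) is the label of the JCM packet W_{n,T,u}; only those with u in the
   smaller part of T are kept. *)
Definition labelled n := {x | labelled_pair n x}.

Definition halved_cached (n : nat) (k : 'I_K) (q : labelled n) := k \in (val q).1.

Lemma card_labelled_with (n : nat) (Q : pred {set 'I_K}) :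
  #|[set q : labelled n | Q (val q).1]| =
  \sum_(T : {set 'I_K} | (#|T| == n) && Q T) weight T.
Proof.
rewrite -(card_imset _ val_inj).
have -> : val @: [set q : labelled n | Q (val q).1] =
          [set y | labelled_pair n y && Q y.1].
  apply/setP => y; rewrite inE; apply/imsetP/idP => [[q]|/andP [Py Qy]].
    by rewrite inE => Qq ->; rewrite (valP q).
  by exists (Sub y Py); rewrite ?inE SubK.
rewrite card_set_sum.
transitivity (\sum_(T : {set 'I_K}) \sum_(u : 'I_K)
                (labelled_pair n (T, u) && Q T : nat)).
  by rewrite pair_big; apply: eq_bigr => -[T u].
rewrite [RHS]big_mkcond; apply: eq_bigr => T _ /=.
rewrite /labelled_pair /=; case: (#|T| == n) => /=; last by rewrite big1.
case: (Q T) => /=; last by rewrite big1 // => u _; rewrite andbF.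
rewrite /weight -sum1_card [RHS]big_mkcond; apply: eq_bigr => u _.
by rewrite andbT; case: (u \in _).
Qed.

Lemma card_labelled (n : nat) :
  #|{: labelled n}| = \sum_(T : {set 'I_K} | #|T| == n) weight T.
Proof.
rewrite (eq_bigl (fun T : {set 'I_K} => (#|T| == n) && xpredT T)) => [|T].
  by rewrite -card_labelled_with -cardsT; apply: eq_card => q; rewrite !inE.
by rewrite andbT.
Qed.

Lemma double_card_labelled_le (n : nat) : 2 * #|{: labelled n}| <= n * 'C(K, n).
Proof.
rewrite card_labelled big_distrr /=.
apply: (@leq_trans (\sum_(T : {set 'I_K} | #|T| == n) n)).
  by apply: leq_sum => T /eqP <-; apply: double_weight_le.
by rewrite sum_nat_cond_const card_draws card_ord mulnC.
Qed.

Definition respects_halves (f : 'I_K -> 'I_K) :=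
  exists swap : bool, forall x, (f x \in lower) = swap (+) (x \in lower).

Lemma weight_imset f : injective f -> respects_halves f ->
  forall T : {set 'I_K}, weight (f @: T) = weight T.
Proof.
move=> inj_f [[] f_lower] T; rewrite !weight_min.
  rewrite (card_imsetI f T lower (~: lower) inj_f) => [|x].
    rewrite (card_imsetI f T (~: lower) lower inj_f) => [|x]; first exact: minnC.
    by rewrite in_setC f_lower negbK.
  by rewrite in_setC f_lower.
rewrite (card_imsetI f T lower lower inj_f) => [|x]; last by rewrite f_lower.
rewrite (card_imsetI f T (~: lower) (~: lower) inj_f) // => x.
by rewrite !in_setC f_lower.
Qed.

Definition load (n : nat) (k : 'I_K) :=
  \sum_(T : {set 'I_K} | (#|T| == n) && (k \in T)) weight T.

Lemma load_imset (n : nat) {f : 'I_K -> 'I_K} : injective f -> respects_halves f ->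
  forall k, load n (f k) = load n k.
Proof.
move=> inj_f f_halves k; rewrite /load (reindex_inj (imset_inj inj_f)) /=.
apply: eq_big => [T|T _]; first by rewrite card_imset // mem_imset.
exact: weight_imset.
Qed.

Lemma tperm_respects_halves k k' :
  (k \in lower) = (k' \in lower) -> respects_halves (tperm k k').
Proof. by move=> same_half; exists false => x; case: tpermP => // ->. Qed.

Lemma card_halved_cachers (n : nat) (q : labelled n) :
  #|[set k | halved_cached n k q]| = n.
Proof.
have /andP [/eqP card_q _] := valP q.
by rewrite -[X in _ = X]card_q; apply: eq_card => k; rewrite inE.
Qed.

Section HalvesSymmetry.
Hypothesis K_double : K = h + h.
Hypothesis h_gt0 : 0 < h.

Definition swap_halves (x : 'I_K) : 'I_K :=
  insubd x (if x < h then x + h else x - h).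

Lemma val_swap_halves x : val (swap_halves x) = if x < h then x + h else x - h.
Proof.
by rewrite /swap_halves insubdK // -topredE /=; have := ltn_ord x; case: ifP; lia.
Qed.

Lemma swap_halves_inj : injective swap_halves.
Proof.
move=> x y /(congr1 val); rewrite !val_swap_halves => eq_xy; apply: ord_inj.
by move: eq_xy (ltn_ord x) (ltn_ord y); case: ifP; case: ifP; lia.
Qed.

Lemma swap_halves_lower x : (swap_halves x \in lower) = ~~ (x \in lower).
Proof. by rewrite !inE val_swap_halves; have := ltn_ord x; case: ifP; lia. Qed.

Lemma swap_halves_respects : respects_halves swap_halves.
Proof. by exists true; apply: swap_halves_lower. Qed.

Lemma load_const (n : nat) k k' : load n k = load n k'.
Proof.
wlog same_half : k / (k \in lower) = (k' \in lower).
  move=> same; have [/same //|diff_half] := eqVneq (k \in lower) (k' \in lower).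
  rewrite -(load_imset n swap_halves_inj swap_halves_respects k); apply: same.
  rewrite swap_halves_lower; move: diff_half.
  by case: (k \in lower); case: (k' \in lower).
rewrite -(tpermL k k'); apply/esym/load_imset; first exact: perm_inj.
exact: tperm_respects_halves.
Qed.

Lemma card_halved_cached (n : nat) k :
  K * #|[set q : labelled n | halved_cached n k q]| = n * #|{: labelled n}|.
Proof.
have load_cached j : #|[set q : labelled n | halved_cached n j q]| = load n j.
  exact: (card_labelled_with n (fun T => j \in T)).
transitivity (\sum_(j < K) #|[set q : labelled n | halved_cached n j q]|).
  rewrite (eq_bigr (fun _ => load n k)) => [|j _].
    by rewrite sum_nat_const card_ord load_cached.
  by rewrite load_cached (load_const n j k).
under eq_bigr => j _ do rewrite card_set_sum.
rewrite exchange_big /=.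
transitivity (\sum_(q : labelled n) n); last by rewrite sum_nat_const mulnC.
by apply: eq_bigr => q _; rewrite -card_set_sum card_halved_cachers.
Qed.

Lemma card_labelled_gt0 (n : nat) : 2 <= n -> n <= K -> 0 < #|{: labelled n}|.
Proof.
move=> n_ge2 n_leK; have K_gt0 : 0 < K by lia.
set a := Ordinal K_gt0; set b := swap_halves a.
have lower_a : a \in lower by rewrite inE.
have upper_b : b \notin lower by rewrite swap_halves_lower lower_a.
have ab : a != b by apply: contraNneq upper_b => <-.
have [A sub_A card_A] : exists2 A : {set 'I_K}, A \subset ~: [set a; b] & #|A| = n - 2.
  by apply: exists_subset_card; rewrite cardsCs setCK card_ord cards2 ab; lia.
have [aA bA] : a \notin A /\ b \notin A.
  by split; apply/negP => /(subsetP sub_A); rewrite !inE eqxx ?orbT.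
set T := a |: (b |: A).
have card_T : #|T| = n by rewrite !cardsU1 in_setU1 (negbTE ab) aA bA card_A; lia.
have weight_T : 0 < weight T.
  rewrite weight_min leq_min; apply/andP; split; apply/card_gt0P.
    by exists a; rewrite in_setI setU11 lower_a.
  by exists b; rewrite in_setI in_setU1 setU11 orbT in_setC upper_b.
by rewrite card_labelled (bigD1 T) ?card_T //=; apply: leq_trans weight_T (leq_addr _ _).
Qed.

End HalvesSymmetry.

Definition label (S : {set 'I_K}) (r u : 'I_K) :=
  if small_side (S :\ r) == small_side S then u
  else transfer ((S :\ r) :&: ~: lower) ((S :\ r) :&: lower) u.

Section Label.
Context {S : {set 'I_K}} {r : 'I_K}.
Hypotheses (odd_S : odd #|S|) (Sr : r \in S).

Lemma label_in u : u \in (S :&: small_side S) :\ r ->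
  label S r u \in (S :\ r) :&: small_side (S :\ r).
Proof.
move=> /setD1P [ur /setIP [Su side_u]].
have Sr_u : u \in S :\ r by rewrite in_setD1 ur Su.
have [E | [E1 E2 eq_card]] := small_side_setD1 odd_S Sr.
  by rewrite /label E eqxx in_setI Sr_u.
rewrite /label E1 E2 (negbTE (set_neq_setC lower r)).
by apply: (transfer_in _ _ eq_card); rewrite in_setI Sr_u -E1.
Qed.

Lemma label_inj : {in (S :&: small_side S) :\ r &, injective (label S r)}.
Proof.
move=> u v /setD1P [ur /setIP [Su side_u]] /setD1P [vr /setIP [Sv side_v]].
rewrite /label; have [-> | [E1 E2 eq_card]] := small_side_setD1 odd_S Sr.
  by rewrite eqxx.
rewrite E1 E2 (negbTE (set_neq_setC lower r)); apply: (transfer_inj _ _ eq_card).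
  by rewrite in_setI in_setD1 ur Su -E1.
by rewrite in_setI in_setD1 vr Sv -E1.
Qed.

Lemma label_onto l : l \in (S :\ r) :&: small_side (S :\ r) ->
  exists2 u, u \in (S :&: small_side S) :\ r & label S r u = l.
Proof.
move=> /setIP [/setD1P [lr Sl] side_l].
have [E | [E1 E2 eq_card]] := small_side_setD1 odd_S Sr.
  by exists l; rewrite /label ?E ?eqxx // in_setD1 lr in_setI Sl -E side_l.
have [|u] := transfer_onto _ _ eq_card l; first by rewrite in_setI in_setD1 lr Sl -E2.
rewrite in_setI => /andP [/setD1P [ur Su] upper_u] <-.
exists u; first by rewrite in_setD1 ur in_setI Su E1.
by rewrite /label E1 E2 (negbTE (set_neq_setC lower r)).
Qed.

End Label.

Section Delivery.
Variable t : nat.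
Hypothesis t_even : ~~ odd t.

Definition halved_sender (x : labelled t.+1) := (val x).2.
Definition halved_target (x : labelled t.+1) (r : 'I_K) : option (labelled t) :=
  if (r \in (val x).1) && (r != (val x).2)
  then insub ((val x).1 :\ r, label (val x).1 r (val x).2) else None.

Lemma labelled_pair_setD1 (S : {set 'I_K}) (r u : 'I_K) :
    #|S| = t.+1 -> r \in S -> u \in (S :&: small_side S) :\ r ->
  labelled_pair t (S :\ r, label S r u).
Proof.
move=> cS Sr Su; rewrite /labelled_pair /= label_in ?cS //= ?t_even // andbT.
by have := cardsD1 r S; rewrite Sr cS add1n => -[->].
Qed.

Lemma halved_targetP x r q : halved_target x r = Some q ->
  [/\ r \in (val x).1, r != (val x).2 &
      val q = ((val x).1 :\ r, label (val x).1 r (val x).2)].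
Proof.
rewrite /halved_target; case: ifP => // cond; case/andP: cond => Sr ru.
by case: insubP => // q' _ val_q' [<-].
Qed.

Lemma halved_target_some (x : labelled t.+1) r :
    r \in (val x).1 -> r != (val x).2 ->
  exists2 q, halved_target x r = Some q &
             val q = ((val x).1 :\ r, label (val x).1 r (val x).2).
Proof.
case: x => [[S u] Px] /= Sr ru; have /andP [/eqP cS Su] := Px.
have Pq : labelled_pair t (S :\ r, label S r u).
  by apply: labelled_pair_setD1; rewrite // in_setD1 eq_sym ru.
by exists (Sub _ Pq); rewrite // /halved_target /= Sr ru (insubT _ Pq).
Qed.

Lemma halved_target_cached_sender x r q :
  halved_target x r = Some q -> halved_cached t (halved_sender x) q.
Proof.
case: x => [[S u] Px] /halved_targetP [_ ru val_q].
have /andP [_ /setIP [/= Su _]] := Px.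
by rewrite /halved_cached val_q /= in_setD1 Su andbT eq_sym.
Qed.

Lemma halved_target_uncached x r q :
  halved_target x r = Some q -> ~~ halved_cached t r q.
Proof. by case/halved_targetP => _ _ val_q; rewrite /halved_cached val_q setD11. Qed.

Lemma halved_target_cached_others x r r' q q' :
    halved_target x r = Some q -> halved_target x r' = Some q' -> r != r' ->
  halved_cached t r q'.
Proof.
case/halved_targetP => Sr _ _ /halved_targetP [_ _ val_q'] rr'.
by rewrite /halved_cached val_q' /= in_setD1 rr'.
Qed.

Lemma halved_target_cover k q :
  ~~ halved_cached t k q -> exists x, halved_target x k = Some q.
Proof.
case: q => [[T l] Pq]; have /andP [/eqP /= cT /= Tl] := Pq.
rewrite /halved_cached /= => Tk; set S := k |: T.
have cS : #|S| = t.+1 by rewrite cardsU1 Tk cT.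
have Sk : k \in S := setU11 k T.
have odd_S : odd #|S| by rewrite cS /= t_even.
have ST : S :\ k = T := setU1K Tk.
rewrite -ST in Tl; have [u /setD1P [uk Su] lab] := label_onto odd_S Sk l Tl.
have Px : labelled_pair t.+1 (S, u) by rewrite /labelled_pair /= cS eqxx.
have [|q' Eq val_q'] := halved_target_some (Sub (S, u) Px) k Sk; first by rewrite eq_sym.
by exists (Sub _ Px); rewrite Eq; congr Some; apply: val_inj; rewrite val_q' /= ST lab.
Qed.

Lemma halved_target_inj x x' r q :
  halved_target x r = Some q -> halved_target x' r = Some q -> x = x'.
Proof.
case: x => [[S u] Px]; case: x' => [[S' u'] Px'].
move=> /halved_targetP [/= Sr ru val_q] /halved_targetP [/= S'r ru'].
rewrite val_q => -[eS eq_label].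
have eSS' : S = S' by rewrite -(setD1K Sr) eS setD1K.
subst S'; apply: val_inj; congr pair => /=.
have /andP [/eqP /= cS /= Su] := Px; have /andP [_ /= Su'] := Px'.
have odd_S : odd #|S| by rewrite cS /= t_even.
by apply: (label_inj odd_S Sr) eq_label; rewrite in_setD1 eq_sym ?ru ?ru'.
Qed.

Lemma card_halved_receivers x : #|[set r | halved_target x r != None]| = t.
Proof.
have -> : [set r | halved_target x r != None] = (val x).1 :\ (val x).2.
  apply/setP => r; rewrite !inE andbC.
  have [Sr|Sr] := boolP (r \in (val x).1); last by rewrite /halved_target (negbTE Sr).
  have [->|ru] := eqVneq r (val x).2; first by rewrite /halved_target eqxx andbF.
  by have [q -> _] := halved_target_some x r Sr ru.
have /andP [/eqP cS /setIP [Su _]] := valP x.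
by have := cardsD1 (val x).2 (val x).1; rewrite Su cS add1n => -[].
Qed.

End Delivery.
End HalvedScheme.

Section RateArithmetic.
Local Open Scope ring_scope.

Lemma load_cache_size {N K t c F : nat} {M : rat} :
    (0 < K)%N -> (0 < N)%N -> K%:R * M / N%:R = t%:R -> (K * c = t * F)%N ->
  (N * c)%:R = M * F%:R :> rat.
Proof.
move=> K_gt0 N_gt0 KM_t /(congr1 (GRing.natmul (1 : rat))).
rewrite !natrM -KM_t => eq_KcF.
have K_ne0 : K%:R != 0 :> rat by rewrite pnatr_eq0 -lt0n.
have N_ne0 : N%:R != 0 :> rat by rewrite pnatr_eq0 -lt0n.
apply: (mulfI K_ne0); rewrite mulrCA eq_KcF; field; exact: N_ne0.
Qed.

Lemma rate_of_counts {N K t X F : nat} {M : rat} :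
    (0 < N)%N -> (0 < t)%N -> (0 < F)%N -> (t <= K)%N ->
    K%:R * M / N%:R = t%:R -> (t * X = (K - t) * F)%N ->
  X%:R / F%:R = N%:R / M - 1 :> rat.
Proof.
move=> N_gt0 t_gt0 F_gt0 t_leK KM_t /(congr1 (GRing.natmul (1 : rat))).
rewrite !natrM natrB // => eq_tXF.
have t_ne0 : t%:R != 0 :> rat by rewrite pnatr_eq0 -lt0n.
have N_ne0 : N%:R != 0 :> rat by rewrite pnatr_eq0 -lt0n.
have F_ne0 : F%:R != 0 :> rat by rewrite pnatr_eq0 -lt0n.
have K_ne0 : K%:R != 0 :> rat by rewrite pnatr_eq0 -lt0n; lia.
have -> : M = t%:R * N%:R / K%:R by rewrite -KM_t; field; apply/andP.
apply: (mulfI t_ne0); rewrite mulrA eq_tXF; field.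
by rewrite t_ne0 N_ne0 K_ne0 F_ne0.
Qed.

End RateArithmetic.

Theorem theorem2 (N K t : nat) (M : rat) :
  (1 <= N)%N -> (2 <= K)%N ->
  (0 < M)%R -> (M <= N%:R)%R ->
  (K%:R * M / N%:R = t%:R :> rat)%R ->
  ~~ odd K -> ~~ odd t -> (2 <= t)%N -> (t <= K)%N ->
  exists F : nat,
    (F%:R <= (F_JCM K t)%:R / 2 :> rat)%R /\
    achievable_with N K M (N%:R / M - 1)%R F.
Proof.
move=> N_gt0 K_ge2 _ _ KM_t K_even t_even t_ge2 t_leK.
have [h K_double] : exists h, K = h + h by exists K./2; rewrite addnn even_halfK.
have h_gt0 : 0 < h by lia.
have P_gt0 := card_labelled_gt0 K h K_double h_gt0 t t_ge2 t_leK.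
exists #|{: labelled K h t}|; split.
  rewrite ler_pdivlMr // -natrM ler_nat mulnC.
  exact: double_card_labelled_le.
split=> // b _.
have cache_ok k : ((N * #|[set q | halved_cached K h t k q]|)%:R
                   <= M * #|{: labelled K h t}|%:R :> rat)%R.
  have K_gt0 : 0 < K by lia.
  have := card_halved_cached K h K_double h_gt0 t k.
  by move/(load_cache_size K_gt0 N_gt0 KM_t) => ->.
have [S rate_S] := design_scheme_rate (halved_target_cached_sender K h t)
  (halved_target_uncached K h t) (halved_target_cached_others K h t)
  (halved_target_cover K h t t_even) cache_ok b N_gt0.
have t_gt0 : 0 < t by lia.
exists S; apply: etrans rate_S (rate_of_counts N_gt0 t_gt0 P_gt0 t_leK KM_t _).
exact: card_transmissions (halved_target_uncached K h t)
  (halved_target_cover K h t t_even) t (card_halved_receivers K h t t_even)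
  (card_halved_cachers K h t) (halved_target_inj K h t t_even).
Qed.
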